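(* Let $n$ be a positive integer and $w_1\le\dots\le w_m$ a feasible partition of $n$ with partial sums $R_i=w_1+\dots+w_i$, $R_0=0$. Then for every $1\le i\le m$, $R_i \ge \frac{3w_i-1}{2}$.
   Context: A weighing partition of a positive integer $n$ is a multiset of positive integers summing to $n$ such that every integer $\ell$ with $1\le\ell\le n$ is a sum $\sum_j u_jw_j$ with $u_j\in\{-1,0,1\}$. A feasible partition of $n$ is a weighing partition of $n$ whose number of parts $m$ is minimal among all weighing partitions of $n$, written $w_1\le\dots\le w_m$. *)

From mathcomp Require Import all_boot all_order all_algebra.
Set Implicit Arguments. Unset Strict Implicit. Unset Printing Implicit Defensive.
Import Order.TTheory GRing.Theory Num.Theory.

(* A multiset of positive integers is represented by a list [s : seq nat]
   (order irrelevant). *)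

Definition signed_representable (s : seq nat) (l : int) : Prop :=
  exists u : seq int,
    size u = size s /\
    all (fun x : int => x \in [:: (-1)%R; 0%R; 1%R]) u /\
    (\sum_(j < size s) u`_j * ((nth 0%N s j)%:Z))%R = l.

Definition weighing_partition (n : nat) (s : seq nat) : Prop :=
  all (fun w => 0 < w) s /\ sumn s = n /\
  forall l : nat, 1 <= l <= n -> signed_representable s l%:Z.

Definition feasible_partition (n : nat) (s : seq nat) : Prop :=
  weighing_partition n s /\
  forall t : seq nat, weighing_partition n t -> size s <= size t.

From mathcomp Require Import all_boot all_order all_algebra.
From mathcomp Require Import zify.
Import Order.TTheory GRing.Theory Num.Theory.

(* Split a sorted weighing partition
   before its k-th part w_k into a prefix of sum R and a tail of sum T >= w_k,
   and suppose w_k > 2R + 1.  Represent l = T - R - 1 as A + B with A the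
   signed prefix part, so |A| <= R, and B the signed tail part.  Then
   T - B = R + 1 + A lies in [1, 2R + 1], hence strictly between 0 and w_k;
   but T - B = \sum (1 - u_j) w_j over the tail, a sum of terms equal to 0 or
   at least w_k, which is either 0 or at least w_k. *)

Lemma sum_eq0_or_ge (I : Type) (r : seq I) (P : pred I) (F : I -> int) (w : int) :
  (0 <= w)%R -> (forall i, P i -> F i = 0 \/ (w <= F i)%R) ->
  (\sum_(i <- r | P i) F i = 0 \/ w <= \sum_(i <- r | P i) F i)%R.
Proof.
move=> w0 hF.
pose Q (x : int) := (x == 0) || (w <= x)%R.
suff /orP[/eqP|] : Q (\sum_(i <- r | P i) F i)%R by [left | right].
apply: (big_ind Q) => [|x y|i /hF[->|wF]]; rewrite /Q ?eqxx ?wF ?orbT //.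
by move=> /orP[/eqP->|xw] /orP[/eqP->|yw]; apply/orP; lia.
Qed.

Lemma trit_cases (x : int) : x \in [:: (-1)%R; 0%R; 1%R] ->
  [\/ x = -1, x = 0 | x = 1]%R.
Proof. by rewrite !inE => /or3P[] /eqP; constructor. Qed.

Lemma trit_mul_norm_le (x : int) (a : nat) : x \in [:: (-1)%R; 0%R; 1%R] ->
  (`|x * a%:Z| <= a%:Z)%R.
Proof. by case/trit_cases => ->; rewrite normrM; lia. Qed.

Lemma weighing_partition_nth_le (n : nat) (s : seq nat) (k : nat) :
  sorted leq s -> k < size s -> weighing_partition n s ->
  nth 0 s k <= (\sum_(j < k) nth 0 s j).*2.+1.
Proof.
move=> s_sorted ks [_ [sum_s rep]].
rewrite -(big_mkord xpredT).
set N := size s; set w := nth 0 s k.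
set R := \sum_(0 <= j < k) nth 0 s j; set T := \sum_(k <= j < N) nth 0 s j.
have nRT : n = R + T by rewrite -sum_s sumnE (big_nth 0) -big_cat_nat // (ltnW ks).
have wT : w <= T by rewrite /T big_ltn //= leq_addr.
rewrite leqNgt; apply/negP => w_big.
have [u [size_u [u_trits sum_u]]] := rep (T - R - 1) ltac:(lia).
have u_trit j : j < N -> (u`_j \in [:: -1; 0; 1])%R.
  by move: u_trits => /(all_nthP 0%R) u_trits jN; apply: u_trits; rewrite size_u.
move: sum_u; rewrite -(big_mkord xpredT (fun j => u`_j * (nth 0%N s j)%:Z)%R).
rewrite (big_cat_nat _ (n := k)) //=; last exact: ltnW.
set A := (\sum_(0 <= j < k) _)%R; set B := (\sum_(k <= j < N) _)%R => sum_AB.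
have A_le : (`|A| <= R%:Z)%R.
  rewrite /R -natz natr_sum (le_trans (ler_norm_sum _ _ _)) //.
  apply: ler_sum_nat => j /andP[_ jk]; rewrite natz.
  by apply/trit_mul_norm_le/u_trit; lia.
have tail_defect : (T%:Z - B = \sum_(k <= j < N) (1 - u`_j) * (nth 0%N s j)%:Z)%R.
  by rewrite /T -natz natr_sum /B -sumrB; apply: eq_bigr => j _; rewrite mulrBl mul1r natz.
suff : (T%:Z - B = 0 \/ w%:Z <= T%:Z - B)%R by case; lia.
rewrite tail_defect big_nat; apply: sum_eq0_or_ge => // j /andP[kj jN].
have w_le : w <= nth 0 s j.
  by apply: (sorted_leq_nth leq_trans leqnn 0 s_sorted); rewrite ?inE //; lia.
by case/trit_cases: (u_trit j jN) => ->; [right | right | left]; lia.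
Qed.

Theorem mainTheorem4 (n : nat) (s : seq nat) :
  0 < n -> sorted leq s -> feasible_partition n s ->
  forall i : nat, 1 <= i <= size s ->
    ((3%:R * (nth 0 s i.-1)%:R - 1) / 2%:R <= ((\sum_(j < i) nth 0 s j)%N)%:R :> rat)%R.
Proof.
move=> _ s_sorted [weighing _] [//|k] /andP[_ ks].
have := @weighing_partition_nth_le n s k s_sorted ks weighing.
rewrite big_ord_recr /=; set R := \sum_(j < k) nth 0 s j; set w := nth 0 s k.
move=> w_le.
have lhs_eq : ((3%:R * w%:R - 1) / 2%:R = (3 * w)%:R / 2%:R - 1 / 2%:R :> rat)%R.
  by rewrite natrM mulrBl.
rewrite lhs_eq lerBlDr ler_pdivrMr // mulrDl divfK // -natrM natr1 ler_nat.
lia.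
Qed.
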